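(* Let $I$ be a finite category with a degree function $|\cdot|:\mathrm{Ob}(I)\to\{0,1\}$ such that $|i|<|j|$ for every non-identity morphism $u:i\to j$, and let $\mathcal{C}:I\to\mathsf{Cat}$ be a functor such that each $\mathcal{C}_i=\mathcal{C}(i)$ is a P-category $(\mathcal{C}_i,P,\mathcal{F}_i,\mathcal{W}_i)$ and each $u_*=\mathcal{C}(u):\mathcal{C}_i\to\mathcal{C}_j$ preserves path objects, fibrations, weak equivalences and fibre products. Then the diagram category $\Gamma\mathcal{C}$ is a P-category with path objects, fibrations, weak equivalences and fibre products defined level-wise.
   Context: $\Gamma\mathcal{C}$: objects are families $A_i\in\mathcal{C}_i$ ($i\in I$) with comparison morphisms $\varphi_u:u_*(A_i)\to A_j$ for $u:i\to j$; morphisms $f:A\to B$ are families $f_i:A_i\to B_i$ with $f_j\varphi_u=\varphi_uu_*(f_i)$. Level-wise path: $P(A)=(P(A_i),P(\varphi_u))$ with level-wise $\iota$, $\delta^k$ (and level-wise symmetry, coproduct, interchange, folding map). P-category: a category with finite products and final object $e$, a functorial path $P$ ($\iota:1\to P$, $\delta^0,\delta^1:P\to1$, $\delta^k\iota=1$) equipped with natural transformations $\tau:P\to P$, $c:P\to P^2$, $\mu:P^2\to P^2$, $\nabla:P^2\to P$ with $\tau\tau=1,\tau\iota=\iota,\delta^k\tau=\delta^{1-k}$; $c_{P(A)}c_A=P(c_A)c_A$, $\delta^1_{P(A)}c_A=P(\delta^1_A)c_A=1$, $c_A\iota_A=\iota_{P(A)}\iota_A$, $\delta^0_{P(A)}c_A=P(\delta^0_A)c_A=\iota_A\delta^0_A$;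 $\mu$ invertible, $\delta^k_{P(A)}\mu_A=P(\delta^k_A)$, $P(\delta^k_A)\mu_A=\delta^k_{P(A)}$; $\delta^k\nabla=\delta^k\delta^k_P$, $\nabla\iota_P=1$; and classes $\mathcal{F}$ (fibrations), $\mathcal{W}$ (weak equivalences) with: (P$_1$) both contain isomorphisms, closed under composition, $\mathcal{W}$ 2-out-of-3, $A\to e$ fibrations; (P$_2$) $\iota_A\in\mathcal{W}$, $(\delta^0,\delta^1):P(A)\to A\times A$ fibration, $\delta^k$ trivial fibrations; (P$_3$) for $u:A\to C$ and a fibration $v:B\to C$, $A\times_CB$ exists, $\pi_1$ is a fibration, trivial if $v$ is, and $\pi_2$ is a weak equivalence if $u$ is; (P$_4$) $P$ preserves fibrations, weak equivalences and fibre products; (P$_5$) for each fibration $v:A\to B$, $((\delta^0_A,\delta^1_A),P(v)):P(A)\to(A\times A)\times_{B\times B}P(B)$ is a fibration. *)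

From Stdlib Require Import List.
Set Implicit Arguments.
Unset Strict Implicit.

Record Cat := mkCat {
  Ob : Type;
  Hom : Ob -> Ob -> Type;
  idm : forall A, Hom A A;
  comp : forall A B C, Hom B C -> Hom A B -> Hom A C }.
Arguments Hom {c} A B.
Arguments idm {c} A.
Arguments comp {c A B C} g f.
Notation "g ∘ f" := (comp g f) (at level 40, left associativity).

Record CatLaws (C : Cat) : Prop := {
  comp_id_l : forall (A B : Ob C) (f : Hom A B), idm B ∘ f = f;
  comp_id_r : forall (A B : Ob C) (f : Hom A B), f ∘ idm A = f;
  comp_assoc : forall (A B X Y : Ob C) (h : Hom X Y) (g : Hom B X) (f : Hom A B),
      h ∘ (g ∘ f) = (h ∘ g) ∘ f }.

Definition isIso {C : Cat} {A B : Ob C} (f : Hom A B) : Prop :=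
  exists g : Hom B A, g ∘ f = idm A /\ f ∘ g = idm B.

Definition castH {C : Cat} {A B : Ob C} (e : A = B) : Hom A B :=
  match e in _ = B' return Hom A B' with eq_refl => idm A end.

Definition is_id {C : Cat} {i j : Ob C} (u : Hom i j) : Prop :=
  exists e : j = i, eq_rect j (fun k => Hom i k) u i e = idm i.

Definition finite_cat (C : Cat) : Prop :=
  (exists lo : list (Ob C), forall i, In i lo) /\
  (forall i j : Ob C, exists lh : list (Hom i j), forall u, In u lh).

Record Functor (C D : Cat) := mkFunctor {
  fobj : Ob C -> Ob D;
  fmap : forall A B, Hom A B -> Hom (fobj A) (fobj B) }.
Arguments fmap {C D} f {A B} _.

Record FunctorLaws (C D : Cat) (F : Functor C D) : Prop := {
  fmap_id : forall A, fmap F (idm A) = idm (fobj F A);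
  fmap_comp : forall (A B X : Ob C) (g : Hom B X) (f : Hom A B),
      fmap F (g ∘ f) = fmap F g ∘ fmap F f }.

Definition IdF (C : Cat) : Functor C C := @mkFunctor C C (fun A => A) (fun A B f => f).
Definition CompF (C D E : Cat) (G : Functor D E) (F : Functor C D) : Functor C E :=
  @mkFunctor C E (fun A => fobj G (fobj F A)) (fun A B f => fmap G (fmap F f)).

(* strict equality of functors, expressed through object equalities *)
Definition functor_eq (C D : Cat) (F G : Functor C D) : Prop :=
  exists e : forall A, fobj F A = fobj G A,
    forall A B (f : Hom A B), castH (e B) ∘ fmap F f = fmap G f ∘ castH (e A).

Definition is_Cat_functor (I : Cat) (Cs : Ob I -> Cat)
    (Cm : forall i j : Ob I, Hom i j -> Functor (Cs i) (Cs j)) : Prop :=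
  (forall i j (u : Hom i j), FunctorLaws (Cm i j u)) /\
  (forall i, functor_eq (Cm i i (idm i)) (IdF (Cs i))) /\
  (forall i j k (u : Hom i j) (v : Hom j k),
      functor_eq (Cm i k (v ∘ u)) (CompF (Cm j k v) (Cm i j u))).
Arguments is_Cat_functor : clear implicits.

Definition is_terminal {C : Cat} (e : Ob C) : Prop :=
  forall X : Ob C, exists! h : Hom X e, True.

Definition is_product {C : Cat} (A B X : Ob C) (p1 : Hom X A) (p2 : Hom X B) : Prop :=
  forall Y (f : Hom Y A) (g : Hom Y B), exists! h : Hom Y X, p1 ∘ h = f /\ p2 ∘ h = g.
Arguments is_product {C} A B X p1 p2.

Definition has_finite_products (C : Cat) : Prop :=
  (exists e : Ob C, is_terminal e) /\
  (forall A B : Ob C, exists X (p1 : Hom X A) (p2 : Hom X B), is_product A B X p1 p2).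

Definition is_pullback {C : Cat} {A B Z Q : Ob C} (u : Hom A Z) (v : Hom B Z)
    (q1 : Hom Q A) (q2 : Hom Q B) : Prop :=
  u ∘ q1 = v ∘ q2 /\
  forall X (f : Hom X A) (g : Hom X B), u ∘ f = v ∘ g ->
    exists! h : Hom X Q, q1 ∘ h = f /\ q2 ∘ h = g.

(* data of a P-category; delta false = delta^0, delta true = delta^1 *)
Record PData (C : Cat) := mkPData {
  Pf : Functor C C;
  iota : forall A, Hom A (fobj Pf A);
  delta : bool -> forall A, Hom (fobj Pf A) A;
  tau : forall A, Hom (fobj Pf A) (fobj Pf A);
  cpath : forall A, Hom (fobj Pf A) (fobj Pf (fobj Pf A));
  mu : forall A, Hom (fobj Pf (fobj Pf A)) (fobj Pf (fobj Pf A));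
  nabla : forall A, Hom (fobj Pf (fobj Pf A)) (fobj Pf A);
  Fib : forall A B : Ob C, Hom A B -> Prop;
  Weq : forall A B : Ob C, Hom A B -> Prop }.
Arguments iota {C} p A.
Arguments delta {C} p k A.
Arguments tau {C} p A.
Arguments cpath {C} p A.
Arguments mu {C} p A.
Arguments nabla {C} p A.
Arguments Fib {C} p {A B} _.
Arguments Weq {C} p {A B} _.

Notation PO D A := (fobj (Pf D) A).
Notation Pm D f := (fmap (Pf D) f).

Definition preserves_fib_pullbacks {C C' : Cat} (D : PData C) (F : Functor C C') : Prop :=
  forall (A B Z : Ob C) (u : Hom A Z) (v : Hom B Z), Fib D v ->
  forall Q (q1 : Hom Q A) (q2 : Hom Q B), is_pullback u v q1 q2 ->
    is_pullback (fmap F u) (fmap F v) (fmap F q1) (fmap F q2).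

Record PNatural (C : Cat) (D : PData C) : Prop := {
  P_laws : FunctorLaws (Pf D);
  iota_nat : forall A B (f : Hom A B), iota D B ∘ f = Pm D f ∘ iota D A;
  delta_nat : forall k A B (f : Hom A B), delta D k B ∘ Pm D f = f ∘ delta D k A;
  tau_nat : forall A B (f : Hom A B), tau D B ∘ Pm D f = Pm D f ∘ tau D A;
  cpath_nat : forall A B (f : Hom A B), cpath D B ∘ Pm D f = Pm D (Pm D f) ∘ cpath D A;
  mu_nat : forall A B (f : Hom A B), mu D B ∘ Pm D (Pm D f) = Pm D (Pm D f) ∘ mu D A;
  nabla_nat : forall A B (f : Hom A B), nabla D B ∘ Pm D (Pm D f) = Pm D f ∘ nabla D A }.

Record IsPCat (C : Cat) (D : PData C) : Prop := {
  pc_cat : CatLaws C;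
  pc_products : has_finite_products C;
  pc_nat : PNatural D;
  pc_delta_iota : forall k A, delta D k A ∘ iota D A = idm A;
  pc_tau_tau : forall A, tau D A ∘ tau D A = idm (PO D A);
  pc_tau_iota : forall A, tau D A ∘ iota D A = iota D A;
  pc_delta_tau : forall k A, delta D k A ∘ tau D A = delta D (negb k) A;
  pc_c_coassoc : forall A, cpath D (PO D A) ∘ cpath D A = Pm D (cpath D A) ∘ cpath D A;
  pc_c_delta1_l : forall A, delta D true (PO D A) ∘ cpath D A = idm (PO D A);
  pc_c_delta1_r : forall A, Pm D (delta D true A) ∘ cpath D A = idm (PO D A);
  pc_c_iota : forall A, cpath D A ∘ iota D A = iota D (PO D A) ∘ iota D A;
  pc_c_delta0_l : forall A, delta D false (PO D A) ∘ cpath D A = iota D A ∘ delta D false A;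
  pc_c_delta0_r : forall A, Pm D (delta D false A) ∘ cpath D A = iota D A ∘ delta D false A;
  pc_mu_iso : forall A, isIso (mu D A);
  pc_mu_l : forall k A, delta D k (PO D A) ∘ mu D A = Pm D (delta D k A);
  pc_mu_r : forall k A, Pm D (delta D k A) ∘ mu D A = delta D k (PO D A);
  pc_nabla_delta : forall k A, delta D k A ∘ nabla D A = delta D k A ∘ delta D k (PO D A);
  pc_nabla_iota : forall A, nabla D A ∘ iota D (PO D A) = idm (PO D A);
  pc_fib_iso : forall A B (f : Hom A B), isIso f -> Fib D f;
  pc_weq_iso : forall A B (f : Hom A B), isIso f -> Weq D f;
  pc_fib_comp : forall A B X (g : Hom B X) (f : Hom A B), Fib D f -> Fib D g -> Fib D (g ∘ f);
  pc_weq_comp : forall A B X (g : Hom B X) (f : Hom A B), Weq D f -> Weq D g -> Weq D (g ∘ f);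
  pc_weq_2of3_l : forall A B X (g : Hom B X) (f : Hom A B), Weq D g -> Weq D (g ∘ f) -> Weq D f;
  pc_weq_2of3_r : forall A B X (g : Hom B X) (f : Hom A B), Weq D f -> Weq D (g ∘ f) -> Weq D g;
  pc_fib_terminal : forall e, is_terminal e -> forall A (f : Hom A e), Fib D f;
  pc_weq_iota : forall A, Weq D (iota D A);
  pc_fib_delta01 : forall A X (p1 : Hom X A) (p2 : Hom X A), is_product A A X p1 p2 ->
      forall h : Hom (PO D A) X, p1 ∘ h = delta D false A -> p2 ∘ h = delta D true A ->
      Fib D h;
  pc_delta_trivfib : forall k A, Fib D (delta D k A) /\ Weq D (delta D k A);
  pc_pullback : forall A B Z (u : Hom A Z) (v : Hom B Z), Fib D v ->
      (exists Q (q1 : Hom Q A) (q2 : Hom Q B), is_pullback u v q1 q2) /\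
      (forall Q (q1 : Hom Q A) (q2 : Hom Q B), is_pullback u v q1 q2 ->
         Fib D q1 /\ (Weq D v -> Weq D q1) /\ (Weq D u -> Weq D q2));
  pc_P_fib : forall A B (f : Hom A B), Fib D f -> Fib D (Pm D f);
  pc_P_weq : forall A B (f : Hom A B), Weq D f -> Weq D (Pm D f);
  pc_P_pullback : preserves_fib_pullbacks D (Pf D);
  pc_P5 : forall A B (v : Hom A B), Fib D v ->
      forall AA (a1 a2 : Hom AA A), is_product A A AA a1 a2 ->
      forall BB (b1 b2 : Hom BB B), is_product B B BB b1 b2 ->
      forall w : Hom AA BB, b1 ∘ w = v ∘ a1 -> b2 ∘ w = v ∘ a2 ->
      forall d : Hom (PO D B) BB, b1 ∘ d = delta D false B -> b2 ∘ d = delta D true B ->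
      forall Q (q1 : Hom Q AA) (q2 : Hom Q (PO D B)), is_pullback w d q1 q2 ->
      forall h : Hom (PO D A) AA, a1 ∘ h = delta D false A -> a2 ∘ h = delta D true A ->
      forall k : Hom (PO D A) Q, q1 ∘ k = h -> q2 ∘ k = Pm D v ->
      Fib D k }.

Definition cast2 {C C' : Cat} (D : PData C) (D' : PData C') (F : Functor C C')
    (e : forall A, fobj F (PO D A) = PO D' (fobj F A)) (A : Ob C) :
    Hom (fobj F (PO D (PO D A))) (PO D' (PO D' (fobj F A))) :=
  Pm D' (castH (e A)) ∘ castH (e (PO D A)).

Record preserves_path {C C' : Cat} (D : PData C) (D' : PData C') (F : Functor C C')
    (e : forall A, fobj F (PO D A) = PO D' (fobj F A)) : Prop := {
  pp_P : forall A B (f : Hom A B),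
      castH (e B) ∘ fmap F (Pm D f) = Pm D' (fmap F f) ∘ castH (e A);
  pp_iota : forall A, castH (e A) ∘ fmap F (iota D A) = iota D' (fobj F A);
  pp_delta : forall k A, delta D' k (fobj F A) ∘ castH (e A) = fmap F (delta D k A);
  pp_tau : forall A, castH (e A) ∘ fmap F (tau D A) = tau D' (fobj F A) ∘ castH (e A);
  pp_cpath : forall A, cast2 e A ∘ fmap F (cpath D A) = cpath D' (fobj F A) ∘ castH (e A);
  pp_mu : forall A, cast2 e A ∘ fmap F (mu D A) = mu D' (fobj F A) ∘ cast2 e A;
  pp_nabla : forall A, castH (e A) ∘ fmap F (nabla D A) = nabla D' (fobj F A) ∘ cast2 e A }.
Arguments preserves_path {C C'} D D' F e.

Section Gamma.
Variables (I : Cat) (Cs : Ob I -> Cat)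
  (Cm : forall i j : Ob I, Hom i j -> Functor (Cs i) (Cs j)).
Variable HC : forall i, CatLaws (Cs i).
Variable HF : forall (i j : Ob I) (u : Hom i j), FunctorLaws (Cm u).

Record GOb := mkGOb {
  gob : forall i, Ob (Cs i);
  gphi : forall (i j : Ob I) (u : Hom i j), Hom (fobj (Cm u) (gob i)) (gob j) }.

Definition gcomm (A B : GOb) (f : forall i, Hom (gob A i) (gob B i)) : Prop :=
  forall (i j : Ob I) (u : Hom i j), f j ∘ gphi A u = gphi B u ∘ fmap (Cm u) (f i).

Record GHom (A B : GOb) := mkGHom {
  gmor : forall i, Hom (gob A i) (gob B i);
  gmor_comm : gcomm gmor }.
Arguments gmor {A B} _ i.

Lemma gid_comm (A : GOb) : gcomm (A := A) (B := A) (fun i => idm (gob A i)).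
Proof.
  intros i j u. rewrite (fmap_id (HF u)), (comp_id_l (HC j)), (comp_id_r (HC j)).
  reflexivity.
Qed.

Lemma gcomp_comm (A B X : GOb) (g : GHom B X) (f : GHom A B) :
  gcomm (A := A) (B := X) (fun i => gmor g i ∘ gmor f i).
Proof.
  intros i j u. rewrite (fmap_comp (HF u)).
  rewrite <- (comp_assoc (HC j)), (gmor_comm f), (comp_assoc (HC j)), (gmor_comm g).
  rewrite <- (comp_assoc (HC j)). reflexivity.
Qed.

Definition GammaCat : Cat :=
  @mkCat GOb GHom (fun A => mkGHom (gid_comm A))
    (fun A B X g f => mkGHom (gcomp_comm g f)).

Variable D : forall i, PData (Cs i).
Variable HN : forall i, PNatural (D i).
Variable eP : forall (i j : Ob I) (u : Hom i j) (A : Ob (Cs i)),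
  fobj (Cm u) (PO (D i) A) = PO (D j) (fobj (Cm u) A).
Variable HPP : forall (i j : Ob I) (u : Hom i j), preserves_path (D i) (D j) (Cm u) (eP u).

Definition GP (A : GOb) : GOb :=
  @mkGOb (fun i => PO (D i) (gob A i))
    (fun i j u => Pm (D j) (gphi A u) ∘ castH (eP u (gob A i))).

Ltac ra j := repeat rewrite <- (comp_assoc (HC j)).

Lemma GPmap_comm (A B : GOb) (f : GHom A B) :
  gcomm (A := GP A) (B := GP B) (fun i => Pm (D i) (gmor f i)).
Proof.
  intros i j u; simpl.
  rewrite (comp_assoc (HC j)), <- (fmap_comp (P_laws (HN j))).
  rewrite (gmor_comm f), (fmap_comp (P_laws (HN j))). ra j.
  rewrite (pp_P (HPP u)). reflexivity.
Qed.

Definition GPf : Functor GammaCat GammaCat :=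
  @mkFunctor GammaCat GammaCat GP (fun A B f => mkGHom (GPmap_comm f)).

Lemma Giota_comm (A : GOb) :
  gcomm (A := A) (B := GP A) (fun i => iota (D i) (gob A i)).
Proof.
  intros i j u; simpl. ra j. rewrite (pp_iota (HPP u)).
  rewrite (iota_nat (HN j)). reflexivity.
Qed.

Lemma Gdelta_comm (k : bool) (A : GOb) :
  gcomm (A := GP A) (B := A) (fun i => delta (D i) k (gob A i)).
Proof.
  intros i j u; simpl. rewrite (comp_assoc (HC j)), (delta_nat (HN j)).
  ra j. rewrite (pp_delta (HPP u)). reflexivity.
Qed.

Lemma Gtau_comm (A : GOb) :
  gcomm (A := GP A) (B := GP A) (fun i => tau (D i) (gob A i)).
Proof.
  intros i j u; simpl. rewrite (comp_assoc (HC j)), (tau_nat (HN j)).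
  ra j. rewrite (pp_tau (HPP u)). reflexivity.
Qed.

Lemma GP2_phi (A : GOb) (i j : Ob I) (u : Hom i j) :
  gphi (GP (GP A)) u = Pm (D j) (Pm (D j) (gphi A u)) ∘ cast2 (eP u) (gob A i).
Proof.
  simpl. unfold cast2. rewrite (fmap_comp (P_laws (HN j))). ra j. reflexivity.
Qed.

Lemma Gcpath_comm (A : GOb) :
  gcomm (A := GP A) (B := GP (GP A)) (fun i => cpath (D i) (gob A i)).
Proof.
  intros i j u; cbv beta. rewrite GP2_phi. simpl. ra j. rewrite (pp_cpath (HPP u)). simpl.
  rewrite (comp_assoc (HC j)), (cpath_nat (HN j)). ra j. reflexivity.
Qed.

Lemma Gmu_comm (A : GOb) :
  gcomm (A := GP (GP A)) (B := GP (GP A)) (fun i => mu (D i) (gob A i)).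
Proof.
  intros i j u; cbv beta. rewrite !GP2_phi. simpl. ra j. rewrite (pp_mu (HPP u)).
  rewrite (comp_assoc (HC j)), (mu_nat (HN j)). ra j. reflexivity.
Qed.

Lemma Gnabla_comm (A : GOb) :
  gcomm (A := GP (GP A)) (B := GP A) (fun i => nabla (D i) (gob A i)).
Proof.
  intros i j u; cbv beta. rewrite GP2_phi. simpl. ra j. rewrite (pp_nabla (HPP u)).
  rewrite (comp_assoc (HC j)), (nabla_nat (HN j)). ra j. reflexivity.
Qed.

Definition GammaPData : PData GammaCat :=
  @mkPData GammaCat GPf
    (fun A => mkGHom (Giota_comm A))
    (fun k A => mkGHom (Gdelta_comm k A))
    (fun A => mkGHom (Gtau_comm A))
    (fun A => mkGHom (Gcpath_comm A))
    (fun A => mkGHom (Gmu_comm A))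
    (fun A => mkGHom (Gnabla_comm A))
    (fun A B (f : GHom A B) => forall i, Fib (D i) (gmor f i))
    (fun A B (f : GHom A B) => forall i, Weq (D i) (gmor f i)).

Definition Gamma_levelwise_pullbacks : Prop :=
  forall (A B Z : GOb) (u : GHom A Z) (v : GHom B Z),
    Fib GammaPData (A := B) (B := Z) v ->
    exists (Q : GOb) (q1 : GHom Q A) (q2 : GHom Q B),
      @is_pullback GammaCat A B Z Q u v q1 q2 /\
      forall i, is_pullback (gmor u i) (gmor v i) (gmor q1 i) (gmor q2 i).

End Gamma.

(* Everything in Gamma C is computed one level at a time.  A morphism of
   Gamma C is determined by its components, so every equational axiom of a
   P-category holds in Gamma C because it holds in each C_i, and the classes of
   fibrations and weak equivalences inherit (P1)-(P5) level by level.  The only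
   point needing care is that limits are level-wise: given level-wise
   pullbacks, their comparison maps phi_u are forced by the universal property
   at the target level, the result is a pullback in Gamma C, and by uniqueness
   up to isomorphism every pullback of Gamma C is level-wise.  Products are
   pullbacks over the level-wise terminal object, and maps to a terminal object
   are fibrations, so (P2)-(P5) reduce to their level-wise instances. *)
From Stdlib Require Import ClassicalEpsilon FunctionalExtensionality ProofIrrelevance.
Set Implicit Arguments.
Unset Strict Implicit.

Section CategoryFacts.
Variables (C : Cat) (HC : CatLaws C).

Lemma terminal_map_unique (e : Ob C) (He : is_terminal e) (X : Ob C) (f g : Hom X e) :
  f = g.
Proof.
  destruct (He X) as [t [_ Ht]]. rewrite <- (Ht f I), <- (Ht g I). reflexivity.
Qed.

Definition terminal_map (e : Ob C) (He : is_terminal e) (X : Ob C) : Hom X e :=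
  proj1_sig (constructive_indefinite_description _ (He X)).

Lemma is_terminal_retract (e e' : Ob C) (He' : is_terminal e')
    (a : Hom e e') (b : Hom e' e) :
  b ∘ a = idm e -> is_terminal e.
Proof.
  intros Eba X. exists (b ∘ terminal_map He' X). split; [exact I |].
  intros h _. rewrite <- (comp_id_l HC h), <- Eba, <- (comp_assoc HC).
  f_equal. apply (terminal_map_unique He').
Qed.

Lemma pullback_factor {A B Z Q : Ob C} {u : Hom A Z} {v : Hom B Z}
    {q1 : Hom Q A} {q2 : Hom Q B} (H : is_pullback u v q1 q2)
    (X : Ob C) (f : Hom X A) (g : Hom X B) :
  u ∘ f = v ∘ g -> exists h : Hom X Q, q1 ∘ h = f /\ q2 ∘ h = g.
Proof. intro E. destruct (proj2 H X f g E) as [h [Hh _]]. eauto. Qed.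

Lemma pullback_map_ext {A B Z Q : Ob C} {u : Hom A Z} {v : Hom B Z}
    {q1 : Hom Q A} {q2 : Hom Q B} (H : is_pullback u v q1 q2)
    (X : Ob C) (h h' : Hom X Q) :
  q1 ∘ h = q1 ∘ h' -> q2 ∘ h = q2 ∘ h' -> h = h'.
Proof.
  intros E1 E2.
  assert (E : u ∘ (q1 ∘ h) = v ∘ (q2 ∘ h)).
  { rewrite !(comp_assoc HC), (proj1 H). reflexivity. }
  destruct (proj2 H X _ _ E) as [m [_ Hm]].
  rewrite <- (Hm h), <- (Hm h'); auto.
Qed.

Definition pullback_pair {A B Z Q : Ob C} {u : Hom A Z} {v : Hom B Z}
    {q1 : Hom Q A} {q2 : Hom Q B} (H : is_pullback u v q1 q2)
    {X : Ob C} (f : Hom X A) (g : Hom X B) (E : u ∘ f = v ∘ g) : Hom X Q :=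
  proj1_sig (constructive_indefinite_description _ (pullback_factor H E)).

Lemma pullback_pair_spec {A B Z Q : Ob C} {u : Hom A Z} {v : Hom B Z}
    {q1 : Hom Q A} {q2 : Hom Q B} (H : is_pullback u v q1 q2)
    {X : Ob C} (f : Hom X A) (g : Hom X B) (E : u ∘ f = v ∘ g) :
  q1 ∘ pullback_pair H E = f /\ q2 ∘ pullback_pair H E = g.
Proof. exact (proj2_sig (constructive_indefinite_description _ (pullback_factor H E))). Qed.

Lemma pullback_comparison {A B Z Q Q' : Ob C} {u : Hom A Z} {v : Hom B Z}
    {p1 : Hom Q A} {p2 : Hom Q B} {q1 : Hom Q' A} {q2 : Hom Q' B}
    (H : is_pullback u v p1 p2) (H' : is_pullback u v q1 q2) :
  exists (a : Hom Q Q') (b : Hom Q' Q),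
    b ∘ a = idm Q /\ a ∘ b = idm Q' /\ q1 ∘ a = p1 /\ q2 ∘ a = p2.
Proof.
  destruct (pullback_factor H' (proj1 H)) as [a [Ea1 Ea2]].
  destruct (pullback_factor H (proj1 H')) as [b [Eb1 Eb2]].
  exists a, b. repeat split; auto.
  - apply (pullback_map_ext H); rewrite (comp_assoc HC), ?Eb1, ?Eb2, (comp_id_r HC); auto.
  - apply (pullback_map_ext H'); rewrite (comp_assoc HC), ?Ea1, ?Ea2, (comp_id_r HC); auto.
Qed.

Lemma is_pullback_iso {A B Z Q Q' : Ob C} {u : Hom A Z} {v : Hom B Z}
    {p1 : Hom Q A} {p2 : Hom Q B} {q1 : Hom Q' A} {q2 : Hom Q' B}
    (H : is_pullback u v q1 q2) (a : Hom Q Q') (b : Hom Q' Q) :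
  b ∘ a = idm Q -> a ∘ b = idm Q' -> q1 ∘ a = p1 -> q2 ∘ a = p2 ->
  is_pullback u v p1 p2.
Proof.
  intros Eba Eab E1 E2. subst p1 p2. split.
  - rewrite !(comp_assoc HC), (proj1 H). reflexivity.
  - intros Y f g E. destruct (pullback_factor H E) as [m [M1 M2]].
    exists (b ∘ m). split.
    + split; rewrite <- (comp_assoc HC), (comp_assoc HC a), Eab, (comp_id_l HC); assumption.
    + intros h [H1 H2]. rewrite <- (comp_id_l HC h), <- Eba, <- (comp_assoc HC).
      f_equal. apply (pullback_map_ext H); rewrite (comp_assoc HC); congruence.
Qed.

Lemma is_product_iff_pullback (e : Ob C) (He : is_terminal e) (A B X : Ob C)
    (tA : Hom A e) (tB : Hom B e) (p1 : Hom X A) (p2 : Hom X B) :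
  is_product A B X p1 p2 <-> is_pullback tA tB p1 p2.
Proof.
  split.
  - intro H. split; [apply (terminal_map_unique He) |]. intros Y f g _. apply H.
  - intros H Y f g. apply (proj2 H). apply (terminal_map_unique He).
Qed.

End CategoryFacts.

Record pullback_cone {C : Cat} {A B Z : Ob C} (u : Hom A Z) (v : Hom B Z) := {
  pb_obj : Ob C;
  pb_pr1 : Hom pb_obj A;
  pb_pr2 : Hom pb_obj B;
  pb_is_pullback : is_pullback u v pb_pr1 pb_pr2 }.

Definition pullback_cone_of_ex {C : Cat} {A B Z : Ob C} {u : Hom A Z} {v : Hom B Z}
    (H : exists Q (q1 : Hom Q A) (q2 : Hom Q B), is_pullback u v q1 q2) :
  pullback_cone u v :=
  let (Q, H1) := constructive_indefinite_description _ H in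
  let (q1, H2) := constructive_indefinite_description _ H1 in
  let (q2, H3) := constructive_indefinite_description _ H2 in
  Build_pullback_cone H3.

Unset Implicit Arguments.

Section GammaLimits.
Context {I : Cat} {Cs : Ob I -> Cat}
  {Cm : forall i j : Ob I, Hom i j -> Functor (Cs i) (Cs j)}
  {HC : forall i, CatLaws (Cs i)}
  {HF : forall (i j : Ob I) (u : Hom i j), FunctorLaws (Cm i j u)}.

Notation GC := (GammaCat HC HF).
Notation GO := (GOb Cm).

Lemma gmor_ext (A B : GO) (f g : @Hom GC A B) : (forall i, gmor f i = gmor g i) -> f = g.
Proof.
  destruct f as [f Hf], g as [g Hg]; simpl; intro E.
  assert (f = g) by (apply functional_extensionality_dep; exact E). subst g.
  f_equal. apply proof_irrelevance.
Qed.

Lemma gmor_congr {A B : GO} {f g : @Hom GC A B} (i : Ob I) : f = g -> gmor f i = gmor g i.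
Proof. intros ->; reflexivity. Qed.

Lemma Gamma_cat_laws : CatLaws GC.
Proof.
  split; intros; apply gmor_ext; intro i; simpl;
    [apply comp_id_l | apply comp_id_r | apply comp_assoc]; apply HC.
Qed.

Lemma isIso_levelwise (A B : GO) (f : @Hom GC A B) : isIso f -> forall i, isIso (gmor f i).
Proof.
  intros [g [E1 E2]] i. exists (gmor g i).
  split; [exact (gmor_congr i E1) | exact (gmor_congr i E2)].
Qed.

Lemma isIso_of_levelwise (A B : GO) (f : @Hom GC A B) :
  (forall i, isIso (gmor f i)) -> isIso f.
Proof.
  intros Hf.
  pose (g i := proj1_sig (constructive_indefinite_description _ (Hf i))).
  assert (Eg : forall i, g i ∘ gmor f i = idm _ /\ gmor f i ∘ g i = idm _).
  { intro i. exact (proj2_sig (constructive_indefinite_description _ (Hf i))). }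
  assert (Hg : gcomm (A := B) (B := A) g).
  { intros i j u.
    rewrite <- (comp_id_r (HC j) (g j ∘ gphi B u)), <- (fmap_id (HF i j u)).
    rewrite <- (proj2 (Eg i)), (fmap_comp (HF i j u)), (comp_assoc (HC j)).
    rewrite <- (comp_assoc (HC j) (g j)), <- (gmor_comm f), (comp_assoc (HC j)).
    rewrite (proj1 (Eg j)), (comp_id_l (HC j)). reflexivity. }
  exists (mkGHom Hg). split; apply gmor_ext; intro i; apply Eg.
Qed.

Section Terminal.
Context {T : forall i, Ob (Cs i)}.
Variable HT : forall i, is_terminal (T i).

Definition Gamma_terminal : GO :=
  mkGOb (gob := T) (fun i j u => terminal_map (HT j) (fobj (Cm i j u) (T i))).

Lemma Gamma_terminal_is_terminal : @is_terminal GC Gamma_terminal.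
Proof.
  intro X.
  assert (Hc : gcomm (A := X) (B := Gamma_terminal) (fun i => terminal_map (HT i) (gob X i))).
  { intros i j u. apply (terminal_map_unique (HT j)). }
  exists (mkGHom Hc). split; [exact Logic.I |].
  intros h _. apply gmor_ext; intro i. apply (terminal_map_unique (HT i)).
Qed.

Lemma is_terminal_levelwise {e : GO} : @is_terminal GC e -> forall i, is_terminal (gob e i).
Proof.
  intros He i.
  pose (a := terminal_map Gamma_terminal_is_terminal e).
  pose (b := terminal_map He Gamma_terminal).
  apply (is_terminal_retract (HC i) (HT i) (a := gmor a i) (b := gmor b i)).
  exact (gmor_congr i (terminal_map_unique He (b ∘ a) (@idm GC e))).
Qed.

End Terminal.

Lemma gmor_comm_of_factor {Y Q A : GO} (p : @Hom GC Q A) (f : @Hom GC Y A)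
    (m : forall i, Hom (gob Y i) (gob Q i)) :
  (forall i, gmor p i ∘ m i = gmor f i) ->
  forall i j (w : Hom i j),
    gmor p j ∘ (m j ∘ gphi Y w) = gmor p j ∘ (gphi Q w ∘ fmap (Cm i j w) (m i)).
Proof.
  intros Hm i j w.
  rewrite (comp_assoc (HC j)), Hm, (gmor_comm f), (comp_assoc (HC j)), (gmor_comm p).
  rewrite <- (comp_assoc (HC j)), <- (fmap_comp (HF i j w)), Hm. reflexivity.
Qed.

Lemma is_pullback_of_levelwise {A B Z Q : GO} (u : @Hom GC A Z) (v : @Hom GC B Z)
    (q1 : @Hom GC Q A) (q2 : @Hom GC Q B) :
  (forall i, is_pullback (gmor u i) (gmor v i) (gmor q1 i) (gmor q2 i)) ->
  @is_pullback GC A B Z Q u v q1 q2.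
Proof.
  intros Hl. split; [apply gmor_ext; intro i; apply (Hl i) |].
  intros Y f g E.
  pose (m i := pullback_pair (Hl i) (gmor_congr i E)).
  assert (Hm : forall i, gmor q1 i ∘ m i = gmor f i /\ gmor q2 i ∘ m i = gmor g i).
  { intro i. apply pullback_pair_spec. }
  assert (Hc : gcomm (A := Y) (B := Q) m).
  { intros i j w. apply (pullback_map_ext (HC j) (Hl j)).
    - apply (gmor_comm_of_factor q1 f); intro k; apply Hm.
    - apply (gmor_comm_of_factor q2 g); intro k; apply Hm. }
  exists (mkGHom Hc). split.
  - split; apply gmor_ext; intro i; apply Hm.
  - intros h [H1 H2]. apply gmor_ext; intro i. simpl.
    apply (pullback_map_ext (HC i) (Hl i)).
    + rewrite (proj1 (Hm i)). symmetry. exact (gmor_congr i H1).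
    + rewrite (proj2 (Hm i)). symmetry. exact (gmor_congr i H2).
Qed.

Section Pullback.
Context {A B Z : GO} {u : @Hom GC A Z} {v : @Hom GC B Z}.
Variable cone : forall i, pullback_cone (gmor u i) (gmor v i).

Lemma cone_phi_compat (i j : Ob I) (w : Hom i j) :
  gmor u j ∘ (gphi A w ∘ fmap (Cm i j w) (pb_pr1 (cone i)))
  = gmor v j ∘ (gphi B w ∘ fmap (Cm i j w) (pb_pr2 (cone i))).
Proof.
  rewrite !(comp_assoc (HC j)), (gmor_comm u), (gmor_comm v), <- !(comp_assoc (HC j)),
    <- !(fmap_comp (HF i j w)), (proj1 (pb_is_pullback (cone i))).
  reflexivity.
Qed.

Definition Gamma_pullback_ob : GO :=
  mkGOb (gob := fun i => pb_obj (cone i))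
    (fun i j w => pullback_pair (pb_is_pullback (cone j)) (cone_phi_compat i j w)).

Lemma Gamma_pullback_pr1_comm :
  gcomm (A := Gamma_pullback_ob) (B := A) (fun i => pb_pr1 (cone i)).
Proof. intros i j w. apply pullback_pair_spec. Qed.

Lemma Gamma_pullback_pr2_comm :
  gcomm (A := Gamma_pullback_ob) (B := B) (fun i => pb_pr2 (cone i)).
Proof. intros i j w. apply pullback_pair_spec. Qed.

Definition Gamma_pullback_cone : @pullback_cone GC A B Z u v :=
  Build_pullback_cone
    (is_pullback_of_levelwise u v
       (mkGHom Gamma_pullback_pr1_comm) (mkGHom Gamma_pullback_pr2_comm)
       (fun i => pb_is_pullback (cone i))).

Lemma is_pullback_levelwise {Q : GO} {q1 : @Hom GC Q A} {q2 : @Hom GC Q B} :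
  @is_pullback GC A B Z Q u v q1 q2 ->
  forall i, is_pullback (gmor u i) (gmor v i) (gmor q1 i) (gmor q2 i).
Proof.
  intros H i.
  destruct (pullback_comparison Gamma_cat_laws H (pb_is_pullback Gamma_pullback_cone))
    as [a [b [Eba [Eab [E1 E2]]]]].
  apply (is_pullback_iso (HC i) (pb_is_pullback (cone i)) (a := gmor a i) (b := gmor b i)).
  - exact (gmor_congr i Eba).
  - exact (gmor_congr i Eab).
  - exact (gmor_congr i E1).
  - exact (gmor_congr i E2).
Qed.

End Pullback.

Section Products.
Context {T : forall i, Ob (Cs i)}.
Variable HT : forall i, is_terminal (T i).
Variable Hprod : forall i (A B : Ob (Cs i)),
  exists X (p1 : Hom X A) (p2 : Hom X B), is_product A B X p1 p2.

Definition terminal_pullback_cone {i : Ob I} {A B : Ob (Cs i)}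
    (a : Hom A (T i)) (b : Hom B (T i)) : pullback_cone a b.
Proof.
  apply pullback_cone_of_ex. destruct (Hprod i A B) as [X [p1 [p2 H]]].
  exists X, p1, p2. exact (proj1 (is_product_iff_pullback (HT i) a b p1 p2) H).
Defined.

Definition to_Gamma_terminal (A : GO) : @Hom GC A (Gamma_terminal HT) :=
  terminal_map (Gamma_terminal_is_terminal HT) A.

Definition product_cone (A B : GO) (i : Ob I) :
    pullback_cone (gmor (to_Gamma_terminal A) i) (gmor (to_Gamma_terminal B) i) :=
  terminal_pullback_cone _ _.

Lemma Gamma_has_finite_products : has_finite_products GC.
Proof.
  split; [exists (Gamma_terminal HT); apply Gamma_terminal_is_terminal |].
  intros A B. pose (P := Gamma_pullback_cone (product_cone A B)).
  exists (pb_obj P), (pb_pr1 P), (pb_pr2 P).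
  exact (proj2 (is_product_iff_pullback (Gamma_terminal_is_terminal HT) _ _ _ _)
           (pb_is_pullback P)).
Qed.

Lemma is_product_levelwise {A B X : GO} {p1 : @Hom GC X A} {p2 : @Hom GC X B} :
  @is_product GC A B X p1 p2 ->
  forall i, is_product (gob A i) (gob B i) (gob X i) (gmor p1 i) (gmor p2 i).
Proof.
  intros H i.
  apply (proj2 (is_product_iff_pullback (HT i)
                  (gmor (to_Gamma_terminal A) i) (gmor (to_Gamma_terminal B) i) _ _)).
  apply (is_pullback_levelwise (product_cone A B)).
  exact (proj1 (is_product_iff_pullback (Gamma_terminal_is_terminal HT) _ _ _ _) H).
Qed.

End Products.

End GammaLimits.

Section GammaPCategory.
Variables (I : Cat) (Cs : Ob I -> Cat)
  (Cm : forall i j : Ob I, Hom i j -> Functor (Cs i) (Cs j)).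
Variable HF : forall (i j : Ob I) (u : Hom i j), FunctorLaws (Cm i j u).
Variable D : forall i, PData (Cs i).
Variable eP : forall (i j : Ob I) (u : Hom i j) (A : Ob (Cs i)),
  fobj (Cm i j u) (PO (D i) A) = PO (D j) (fobj (Cm i j u) A).
Variable HPP : forall (i j : Ob I) (u : Hom i j),
  preserves_path (D i) (D j) (Cm i j u) (eP i j u).
Variable HD : forall i, IsPCat (D i).

Notation HC := (fun i => pc_cat (HD i)).
Notation GC := (GammaCat HC HF).
Notation GD := (GammaPData HC HF (fun i => pc_nat (HD i)) HPP).
Notation GO := (GOb Cm).

Local Ltac levelwise law :=
  intros; apply gmor_ext; let i := fresh "i" in intro i; simpl; destruct (law i); auto.

Definition level_terminal (i : Ob I) : Ob (Cs i) :=
  proj1_sig (constructive_indefinite_description _ (proj1 (pc_products (HD i)))).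

Lemma level_terminal_is_terminal (i : Ob I) : is_terminal (level_terminal i).
Proof.
  exact (proj2_sig (constructive_indefinite_description _ (proj1 (pc_products (HD i))))).
Qed.

Definition fib_pullback_cone {i : Ob I} {A B Z : Ob (Cs i)} (u : Hom A Z) {v : Hom B Z}
    (Hv : Fib (D i) v) : pullback_cone u v :=
  pullback_cone_of_ex (proj1 (pc_pullback (HD i) u Hv)).

Lemma Gamma_fib_pullback_levelwise {A B Z Q : GO} {u : @Hom GC A Z} {v : @Hom GC B Z}
    {q1 : @Hom GC Q A} {q2 : @Hom GC Q B} (Hv : forall i, Fib (D i) (gmor v i)) :
  @is_pullback GC A B Z Q u v q1 q2 ->
  forall i, is_pullback (gmor u i) (gmor v i) (gmor q1 i) (gmor q2 i).
Proof. exact (is_pullback_levelwise (fun i => fib_pullback_cone (gmor u i) (Hv i))). Qed.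

Lemma Gamma_product_levelwise {A B X : GO} {p1 : @Hom GC X A} {p2 : @Hom GC X B} :
  @is_product GC A B X p1 p2 ->
  forall i, is_product (gob A i) (gob B i) (gob X i) (gmor p1 i) (gmor p2 i).
Proof.
  exact (is_product_levelwise level_terminal_is_terminal
           (fun i => proj2 (pc_products (HD i)))).
Qed.

Lemma Gamma_fib_delta01 {A X : GO} {p1 p2 : @Hom GC X A} (Hp : @is_product GC A A X p1 p2)
    (h : @Hom GC (PO GD A) X) :
  p1 ∘ h = delta GD false A -> p2 ∘ h = delta GD true A -> Fib GD h.
Proof.
  intros E1 E2 i.
  apply (pc_fib_delta01 (HD i) (Gamma_product_levelwise Hp i));
    [exact (gmor_congr i E1) | exact (gmor_congr i E2)].
Qed.

Lemma Gamma_PNatural : PNatural GD.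
Proof.
  constructor; [split; levelwise (fun i => P_laws (pc_nat (HD i))) |
                 levelwise (fun i => pc_nat (HD i)) ..].
Qed.

Lemma Gamma_pullbacks_are_levelwise :
  Gamma_levelwise_pullbacks HC HF (fun i => pc_nat (HD i)) HPP.
Proof.
  intros A B Z u v Hv.
  pose (P := Gamma_pullback_cone (HC := HC) (HF := HF)
                (fun i => fib_pullback_cone (gmor u i) (Hv i))).
  exists (pb_obj P), (pb_pr1 P), (pb_pr2 P). split.
  - apply pb_is_pullback.
  - intro i. apply (pb_is_pullback (fib_pullback_cone (gmor u i) (Hv i))).
Qed.

Lemma Gamma_IsPCat : IsPCat GD.
Proof.
  constructor.
  4-13, 15-18: levelwise HD.
  - exact Gamma_cat_laws.
  - exact (Gamma_has_finite_products (HF := HF) level_terminal_is_terminal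
             (fun i => proj2 (pc_products (HD i)))).
  - exact Gamma_PNatural.
  - intro A. apply isIso_of_levelwise; intro i. apply (pc_mu_iso (HD i)).
  - intros A B f Hf i. apply (pc_fib_iso (HD i)), isIso_levelwise, Hf.
  - intros A B f Hf i. apply (pc_weq_iso (HD i)), isIso_levelwise, Hf.
  - intros A B X g f Hf Hg i. apply (pc_fib_comp (HD i)); [apply Hf | apply Hg].
  - intros A B X g f Hf Hg i. apply (pc_weq_comp (HD i)); [apply Hf | apply Hg].
  - intros A B X g f Hg Hgf i. exact (pc_weq_2of3_l (HD i) (Hg i) (Hgf i)).
  - intros A B X g f Hf Hgf i. exact (pc_weq_2of3_r (HD i) (Hf i) (Hgf i)).
  - intros e He A f i.
    apply (pc_fib_terminal (HD i) (is_terminal_levelwise level_terminal_is_terminal He i)).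
  - intros A i. apply (pc_weq_iota (HD i)).
  - intros A X p1 p2 Hp. apply Gamma_fib_delta01, Hp.
  - intros k A. split; intro i; apply (pc_delta_trivfib (HD i)).
  - intros A B Z u v Hv. split.
    + destruct (Gamma_pullbacks_are_levelwise A B Z u v Hv) as [Q [q1 [q2 [H _]]]]. eauto.
    + intros Q q1 q2 H.
      pose proof (fun i => proj2 (pc_pullback (HD i) (gmor u i) (Hv i)) _ _ _
                             (Gamma_fib_pullback_levelwise Hv H i)) as L.
      split; [| split]; intros; intro i; apply (L i); auto.
  - intros A B f Hf i. apply (pc_P_fib (HD i)), Hf.
  - intros A B f Hf i. apply (pc_P_weq (HD i)), Hf.
  - intros A B Z u v Hv Q q1 q2 H. apply is_pullback_of_levelwise; intro i.
    apply (pc_P_pullback (HD i) (Hv i)), (Gamma_fib_pullback_levelwise Hv H i).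
  - intros A B v Hv AA a1 a2 HA BB b1 b2 HB w Ew1 Ew2 d Ed1 Ed2 Q q1 q2 HQ
      h Eh1 Eh2 k Ek1 Ek2 i.
    exact (pc_P5 (HD i) (Hv i) (Gamma_product_levelwise HA i) (Gamma_product_levelwise HB i)
             (gmor_congr i Ew1) (gmor_congr i Ew2) (gmor_congr i Ed1) (gmor_congr i Ed2)
             (Gamma_fib_pullback_levelwise (Gamma_fib_delta01 HB d Ed1 Ed2) HQ i)
             (gmor_congr i Eh1) (gmor_congr i Eh2) (gmor_congr i Ek1) (gmor_congr i Ek2)).
Qed.

End GammaPCategory.

Theorem proposition4p6
  (I : Cat) (HI : CatLaws I) (Ifin : finite_cat I)
  (deg : Ob I -> nat)
  (Hdeg01 : forall i : Ob I, deg i <= 1)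
  (Hdeg : forall (i j : Ob I) (u : Hom i j), ~ is_id u -> deg i < deg j)
  (Cs : Ob I -> Cat) (Cm : forall i j : Ob I, Hom i j -> Functor (Cs i) (Cs j))
  (HCm : is_Cat_functor I Cs Cm)
  (D : forall i : Ob I, PData (Cs i))
  (HD : forall i : Ob I, IsPCat (D i))
  (eP : forall (i j : Ob I) (u : Hom i j) (A : Ob (Cs i)),
      fobj (Cm i j u) (PO (D i) A) = PO (D j) (fobj (Cm i j u) A))
  (HeP : forall (i j : Ob I) (u : Hom i j),
      preserves_path (D i) (D j) (Cm i j u) (eP i j u))
  (Hfib : forall (i j : Ob I) (u : Hom i j) (A B : Ob (Cs i)) (f : Hom A B),
      Fib (D i) f -> Fib (D j) (fmap (Cm i j u) f))
  (Hweq : forall (i j : Ob I) (u : Hom i j) (A B : Ob (Cs i)) (f : Hom A B),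
      Weq (D i) f -> Weq (D j) (fmap (Cm i j u) f))
  (Hpb : forall (i j : Ob I) (u : Hom i j), preserves_fib_pullbacks (D i) (Cm i j u)) :
  IsPCat (GammaPData (fun i => pc_cat (HD i)) (proj1 HCm)
            (fun i => pc_nat (HD i)) HeP)
  /\ Gamma_levelwise_pullbacks (fun i => pc_cat (HD i)) (proj1 HCm)
       (fun i => pc_nat (HD i)) HeP.
Proof.
  split.
  - exact (Gamma_IsPCat I Cs Cm (proj1 HCm) D eP HeP HD).
  - exact (Gamma_pullbacks_are_levelwise I Cs Cm (proj1 HCm) D eP HeP HD).
Qed.
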